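(* Let $I=(\mathcal{M},[N],(u_i)_{i\in[N]})$ be a non-negative instance, $\lambda\ge0$, $\varepsilon>0$, and suppose the $\lambda$-max-min problem for $I$ has a solution. Let $0<\alpha<1$, $0<\beta<1$ with $\alpha\beta>1-\varepsilon$. For each $i$ let $c_i$ be any real with $\alpha\cdot MmS_{u_i}^N(\mathcal{M})\le c_i\le MmS_{u_i}^N(\mathcal{M})$, and let $[N]_{>0}:=\{i: c_i>0\}$. If $[N]_{>0}=\emptyset$, let $S^\varepsilon$ be any allocation. Otherwise let $u_i'(j):=u_i(j)/c_i$ for $i\in[N]_{>0}$, let $\lambda^*:=\max\{\min_{i\in[N]_{>0}}u_i'(S_i): (S_i)_{i\in[N]_{>0}}\text{ a partition of }\mathcal{M}\text{ indexed by }[N]_{>0}\}$, let $(S^\varepsilon_i)_{i\in[N]_{>0}}$ be any partition of $\mathcal{M}$ indexed by $[N]_{>0}$ with $u_i'(S^\varepsilon_i)\ge\beta\lambda^*$ for all $i\in[N]_{>0}$, and set $S^\varepsilon_i:=\emptyset$ for $i\notin[N]_{>0}$. Then $S^\varepsilon=(S^\varepsilon_1,\dots,S^\varepsilon_N)$ is a solution of the $((1-\varepsilon)\lambda)$-max-min problem for $I$, i.e. $u_i(S^\varepsilon_i)\ge(1-\varepsilon)\lambda\cdot MmS_{u_i}^N(\mathcal{M})$ for all $i$.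
   Context: A non-negative instance: finite item set $\mathcal{M}$, agents $[N]=\{1,\dots,N\}$, additive utilities $u_i$ with $u_i(j)\ge0$. $\Pi_N(\mathcal{M})$ is the set of ordered $N$-partitions of $\mathcal{M}$ (parts may be empty). $MmS_{u}^N(\mathcal{M}):=\max_{(S_1,\ldots,S_N)\in\Pi_N(\mathcal{M})}\min_{j} u(S_j)$. An allocation $S$ solves the $\mu$-max-min problem for $I$ iff $u_i(S_i)\ge\mu\cdot MmS_{u_i}^N(\mathcal{M})$ for all $i$. *)

From HB Require Import structures.
From mathcomp Require Import all_boot all_order all_algebra.
Set Implicit Arguments. Unset Strict Implicit. Unset Printing Implicit Defensive.
Import Order.TTheory GRing.Theory Num.Theory.
Local Open Scope ring_scope.

(* minimum / maximum of F over the finite nonempty predicate P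
   (the value 0 on an empty domain is an irrelevant convention) *)
Definition fmin (R : realDomainType) (T : finType) (P : pred T) (F : T -> R) : R :=
  match [pick x in P] with
  | Some x0 => \big[Num.min/F x0]_(x in P) F x
  | None => 0
  end.
Definition fmax (R : realDomainType) (T : finType) (P : pred T) (F : T -> R) : R :=
  match [pick x in P] with
  | Some x0 => \big[Num.max/F x0]_(x in P) F x
  | None => 0
  end.

Definition util (R : realDomainType) (M : finType) (v : M -> R) (S : {set M}) : R :=
  \sum_(j in S) v j.

(* An ordered N-partition of M (parts may be empty) is encoded by an
   assignment f : M -> 'I_N; part i is the bundle of f. *)
Definition bundle (M : finType) (N : nat) (f : {ffun M -> 'I_N}) (i : 'I_N) : {set M} :=
  [set j | f j == i].

Definition MmS (R : realDomainType) (M : finType) (N : nat) (v : M -> R) : R :=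
  fmax (fun _ : {ffun M -> 'I_N} => true)
       (fun f => fmin (fun _ : 'I_N => true) (fun k => util v (bundle f k))).

Definition solves_maxmin (R : realDomainType) (M : finType) (N : nat)
  (u : 'I_N -> M -> R) (mu : R) (f : {ffun M -> 'I_N}) : Prop :=
  forall i : 'I_N, mu * MmS N (u i) <= util (u i) (bundle f i).

(* Rescaling agent i by c_i and passing to the agents with c_i > 0 cannot
   lower the max-min value below lambda: in a lambda-solution every such agent
   gets at least lambda MmS_i >= lambda c_i, and handing the items of the other
   agents to one of them only enlarges bundles.  Hence lambda <= lambda^*, so
   agent i receives at least beta lambda^* c_i >= alpha beta lambda MmS_i,
   and alpha beta > 1 - eps.  An agent with c_i <= 0 has MmS_i = 0. *)
From HB Require Import structures.
From mathcomp Require Import all_boot all_order all_algebra.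
From mathcomp Require Import ring.
Set Implicit Arguments. Unset Strict Implicit. Unset Printing Implicit Defensive.
Import Order.TTheory GRing.Theory Num.Theory.
Local Open Scope ring_scope.

Section MinMax.
Variables (R : realDomainType) (T : finType) (P : pred T) (F : T -> R).

Lemma fmax_ge x : P x -> F x <= fmax P F.
Proof.
move=> Px; rewrite /fmax; case: pickP => [x0 _|/(_ x)]; last by rewrite unfold_in Px.
by apply: le_bigmax_cond; rewrite unfold_in.
Qed.

Lemma fmax_ge0 : (forall x, P x -> 0 <= F x) -> 0 <= fmax P F.
Proof.
move=> F0; rewrite /fmax; case: pickP => [x0|//]; rewrite unfold_in => Px0.
by apply: le_trans (F0 _ Px0) _; apply: le_bigmax_cond; rewrite unfold_in.
Qed.

Lemma fmin_ge b : (exists x, P x) -> (forall x, P x -> b <= F x) -> b <= fmin P F.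
Proof.
move=> [x Px] bF; rewrite /fmin; case: pickP => [x0|/(_ x)]; last by rewrite unfold_in Px.
by rewrite unfold_in => Px0; apply: le_bigmin => [|y]; rewrite ?unfold_in; apply: bF.
Qed.

Lemma fmin_ge0 : (forall x, P x -> 0 <= F x) -> 0 <= fmin P F.
Proof.
move=> F0; rewrite /fmin; case: pickP => [x0|//]; rewrite unfold_in => Px0.
by apply: le_bigmin => [|y]; rewrite ?unfold_in; apply: F0.
Qed.

End MinMax.

Section Utility.
Variables (R : realDomainType) (M : finType) (v : M -> R).
Hypothesis v_ge0 : forall j, 0 <= v j.

Lemma util_ge0 (A : {set M}) : 0 <= util v A.
Proof. exact: sumr_ge0. Qed.

Lemma util_subset (A B : {set M}) : A \subset B -> util v A <= util v B.
Proof.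
move=> sAB; rewrite /util [X in _ <= X](big_setID A) /= (setIidPr sAB).
by rewrite lerDl; apply: sumr_ge0.
Qed.

Lemma MmS_ge0 N : 0 <= MmS N v.
Proof. by apply: fmax_ge0 => f _; apply: fmin_ge0 => k _; apply: util_ge0. Qed.

End Utility.

Lemma util_divr (R : realFieldType) (M : finType) (v : M -> R) c A :
  util (fun j => v j / c) A = util v A / c.
Proof. by rewrite /util mulr_suml. Qed.

(* Every item of an agent outside P is handed to i0, which keeps each agent in
   P at least as well off. *)
Lemma le_maxmin_restrict (R : realDomainType) (M : finType) (N : nat)
    (v : 'I_N -> M -> R) (P : pred 'I_N) (S : {ffun M -> 'I_N}) (lam : R) i0 :
  (forall i j, P i -> 0 <= v i j) -> P i0 ->
  (forall k, P k -> lam <= util (v k) (bundle S k)) ->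
  lam <= fmax (fun g : {ffun M -> 'I_N} => [forall j, P (g j)])
              (fun g => fmin P (fun k => util (v k) (bundle g k))).
Proof.
move=> v_ge0 Pi0 lamS.
pose g := [ffun j => if P (S j) then S j else i0].
have g_in_P : [forall j, P (g j)] by apply/forallP => j; rewrite ffunE; case: ifP.
apply: le_trans (fmax_ge _ g_in_P); apply: fmin_ge; first by exists i0.
move=> k Pk; apply: le_trans (lamS k Pk) _; apply: util_subset => [j|]; first exact: v_ge0.
by apply/subsetP => j; rewrite !inE ffunE => /eqP Sjk; rewrite Sjk Pk.
Qed.

Lemma scaled_guarantee (R : realFieldType) (lam eps alpha beta m c lamstar U : R) :
  0 <= lam -> 0 <= m -> 0 < alpha -> 0 < beta -> 1 - eps < alpha * beta ->
  alpha * m <= c -> 0 < c -> lam <= lamstar -> beta * lamstar <= U / c ->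
  (1 - eps) * lam * m <= U.
Proof.
move=> lam0 m0 alpha0 beta0 eps_ab alpha_m c0 lam_le U_ge.
have {}U_ge : beta * lamstar * c <= U by rewrite -ler_pdivlMr.
apply: (@le_trans _ _ ((alpha * beta) * (lam * m))).
  by rewrite -mulrA; apply: ler_wpM2r; [exact: mulr_ge0 | exact: ltW].
have -> : alpha * beta * (lam * m) = beta * lam * (alpha * m) by ring.
apply: (@le_trans _ _ (beta * lam * c)).
  by apply: ler_wpM2l; rewrite // mulr_ge0 // ltW.
by rewrite (le_trans _ U_ge) // ler_pM2r // ler_pM2l.
Qed.

Theorem theorem3 (R : realFieldType) (M : finType) (N : nat)
  (u : 'I_N -> M -> R) (lam eps alpha beta : R) (c : 'I_N -> R)
  (Sf : {ffun M -> 'I_N}) :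
  (forall i j, 0 <= u i j) ->
  0 <= lam -> 0 < eps ->
  (exists S : {ffun M -> 'I_N}, solves_maxmin u lam S) ->
  0 < alpha < 1 -> 0 < beta < 1 -> 1 - eps < alpha * beta ->
  (forall i, alpha * MmS N (u i) <= c i <= MmS N (u i)) ->
  let Npos := fun i : 'I_N => 0 < c i in
  let u' := fun (i : 'I_N) (j : M) => u i j / c i in
  let lamstar :=
    fmax (fun g : {ffun M -> 'I_N} => [forall j, Npos (g j)])
         (fun g => fmin Npos (fun i => util (u' i) (bundle g i))) in
  ([exists i, Npos i] ->
     (forall j, Npos (Sf j)) /\
     (forall i, Npos i -> beta * lamstar <= util (u' i) (bundle Sf i))) ->
  solves_maxmin u ((1 - eps) * lam) Sf.
Proof.
move=> u_ge0 lam0 _ [S S_sol] /andP[alpha0 _] /andP[beta0 _] eps_ab c_bounds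
  Npos u' lamstar Sf_spec i.
have m0 := MmS_ge0 (u_ge0 i) N.
have [alpha_m _] := andP (c_bounds i).
have [c_le0|c_gt0] := lerP (c i) 0.
  have m_eq0 : MmS N (u i) = 0.
    by apply/le_anti; rewrite m0 andbT -(pmulr_rle0 _ alpha0) (le_trans alpha_m).
  by rewrite m_eq0 mulr0 util_ge0.
have [_ Sf_ge] := Sf_spec (introT existsP (ex_intro _ i c_gt0)).
have lam_le : lam <= lamstar.
  apply: le_maxmin_restrict c_gt0 _ => [k j ck_gt0|k ck_gt0].
    by rewrite /u' divr_ge0 // ltW.
  have [_ c_le_m] := andP (c_bounds k).
  rewrite /u' util_divr ler_pdivlMr //.
  exact: le_trans (ler_wpM2l lam0 c_le_m) (S_sol k).
have := Sf_ge i c_gt0; rewrite /u' util_divr.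
exact: scaled_guarantee lam0 m0 alpha0 beta0 eps_ab alpha_m c_gt0 lam_le.
Qed.
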